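(* Under the setting of the context, if (TS1) holds then the solution $u$ of problem (P) satisfies $u(x,t)\ge0$ for all $(x,t)\in\Omega$.
   Context: A time scale $\mathbb{T}$ is a nonempty closed subset of $\mathbb{R}$; here $\min\mathbb{T}=0$ and $\sup\mathbb{T}=+\infty$. $\sigma(t)=\inf\{s\in\mathbb{T}:s>t\}$ is the forward jump and $\mu_t(t)=\sigma(t)-t$ the graininess; $u^{\Delta_t}$ denotes the (Hilger) delta derivative in $t$. Fix $A>0$, $k>0$, $\mu_x>0$, $\Omega=\mu_x\mathbb{Z}\times\mathbb{T}$. Problem (P): $u^{\Delta_t}(x,t)+k\frac{u(x,t)-u(x-\mu_x,t)}{\mu_x}=0$ for $(x,t)\in\Omega$, $u(0,0)=A$, $u(x,0)=0$ for $x\ne0$. A solution is $u:\Omega\to\mathbb{R}$ with each $u(x,\cdot)$ delta differentiable on $\mathbb{T}$, satisfying (P), and bounded on $\mu_x\mathbb{Z}\times(\mathbb{T}\cap[0,T_0])$ for every $T_0>0$. Condition (TS1): $1-\frac{k\mu_t(t)}{\mu_x}>0$ for all $t\in\mathbb{T}$. *)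

From Stdlib Require Import Reals ZArith.
Open Scope R_scope.

Definition closed_set (T : R -> Prop) : Prop :=
  forall x, (forall eps, 0 < eps -> exists y, T y /\ Rabs (x - y) < eps) -> T x.

Definition time_scale_0_inf (T : R -> Prop) : Prop :=
  closed_set T /\ T 0 /\ (forall t, T t -> 0 <= t) /\
  (forall M, exists t, T t /\ M < t).

Definition is_glb_R (E : R -> Prop) (m : R) : Prop :=
  (forall x, E x -> m <= x) /\ (forall b, (forall x, E x -> b <= x) -> b <= m).

Definition is_sigma (T : R -> Prop) (t s : R) : Prop :=
  is_glb_R (fun r => T r /\ t < r) s.

Definition graininess (T : R -> Prop) (t m : R) : Prop :=
  exists s, is_sigma T t s /\ m = s - t.

Definition delta_deriv (T : R -> Prop) (f : R -> R) (t a : R) : Prop :=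
  exists sg, is_sigma T t sg /\
  forall eps, 0 < eps -> exists delta, 0 < delta /\
    forall s, T s -> Rabs (t - s) < delta ->
      Rabs (f sg - f s - a * (sg - s)) <= eps * Rabs (sg - s).

(* Solution of (P) on Omega = mux Z x T; u n t stands for u(n*mux, t). *)
Definition is_solution_P (T : R -> Prop) (A k mux : R) (u : Z -> R -> R) : Prop :=
  (exists ud : Z -> R -> R,
     forall (n : Z) (t : R), T t ->
       delta_deriv T (u n) t (ud n t) /\
       ud n t + k * (u n t - u (n - 1)%Z t) / mux = 0) /\
  u 0%Z 0 = A /\
  (forall n : Z, n <> 0%Z -> u n 0 = 0) /\
  (forall T0, 0 < T0 -> exists M, forall (n : Z) (t : R),
      T t -> t <= T0 -> Rabs (u n t) <= M).

Definition TS1 (T : R -> Prop) (k mux : R) : Prop :=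
  forall t m, T t -> graininess T t m -> 1 - k * m / mux > 0.

From Pilot Require Import Defs.
From Stdlib Require Import Reals ZArith Lra Psatz Classical.
Open Scope R_scope.

(* With c = k/μx each column solves f^Δ = -c f + c g, where f = u(n,.) and
   g = u(n-1,.).  We argue on time slabs [τ, τ + h], h = 1/(2c).  A barrier
   (comparison) lemma, proved by the induction principle for time scales,
   shows: if f, g ≥ 0 up to τ and g ≥ -a on the slab, then f(t) + b(t - τ) ≥ 0
   there for every b > a c.  Its jump step uses f(σt) = f(t) + μ(t) f^Δ(t)
   and 1 - c μ(t) > 0 from (TS1); its left-dense step uses continuity of
   delta-differentiable functions.  Hence a lower bound -a for all columns on
   a slab improves to -a/2; halving repeatedly from the bound given by the
   boundedness of the solution yields u ≥ 0 on the slab, and slab by slab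
   everywhere. *)

Lemma neg_abs_le (x : R) : - Rabs x <= x.
Proof. pose proof (Rle_abs (- x)) as H. rewrite Rabs_Ropp in H. lra. Qed.

Lemma abs_small_zero (X D : R) :
  0 <= D -> (forall eps, 0 < eps -> Rabs X <= eps * D) -> X = 0.
Proof.
  intros HD H.
  assert (Habs : Rabs X <= 0).
  { apply Rle_plus_epsilon. intros eps Heps.
    assert (Hq : 0 < eps / (D + 1)) by (apply Rdiv_lt_0_compat; lra).
    specialize (H _ Hq).
    assert (eps / (D + 1) * D <= eps).
    { apply (Rmult_le_reg_r (D + 1)); [lra|].
      replace (eps / (D + 1) * D * (D + 1)) with (eps * D) by (field; lra). nra. }
    lra. }
  pose proof (Rabs_pos X). destruct (Req_dec X 0) as [|Hn]; [assumption|].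
  pose proof (Rabs_pos_lt X Hn). lra.
Qed.

Lemma nonneg_limit_slope (x y d : R) :
  0 <= d -> (forall b, y < b -> 0 <= x + b * d) -> 0 <= x + y * d.
Proof.
  intros Hd H.
  enough (- (x + y * d) <= 0) by lra.
  apply Rle_plus_epsilon. intros eps Heps.
  assert (Hq : 0 < eps / (d + 1)) by (apply Rdiv_lt_0_compat; lra).
  specialize (H (y + eps / (d + 1)) ltac:(lra)).
  assert (eps / (d + 1) * d <= eps).
  { apply (Rmult_le_reg_r (d + 1)); [lra|].
    replace (eps / (d + 1) * d * (d + 1)) with (eps * d) by (field; lra). nra. }
  nra.
Qed.

Lemma halving_zero (M x : R) :
  0 <= M -> (forall j : nat, - (M * (/ 2) ^ j) <= x) -> 0 <= x.
Proof.
  intros HM H.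
  enough (- x <= 0) by lra.
  apply Rle_plus_epsilon. intros eps Heps.
  assert (Hy : 0 < eps / (M + 1)) by (apply Rdiv_lt_0_compat; lra).
  destruct (pow_lt_1_zero (/ 2) ltac:(rewrite Rabs_right; lra) _ Hy) as [N HN].
  specialize (HN N (Nat.le_refl N)). specialize (H N).
  assert (Hp : 0 < (/ 2) ^ N) by (apply pow_lt; lra).
  rewrite Rabs_right in HN by lra.
  assert (M * (/ 2) ^ N <= (M + 1) * (eps / (M + 1))) by nra.
  replace ((M + 1) * (eps / (M + 1))) with eps in * by (field; lra).
  lra.
Qed.

Lemma forall_by_steps (Q : R -> Prop) (h : R) :
  0 < h -> Q 0 ->
  (forall tau, 0 <= tau -> Q tau -> Q (tau + h)) ->
  (forall x y, y <= x -> Q x -> Q y) ->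
  forall t, Q t.
Proof.
  intros Hh Q0 Hstep Hdown t.
  assert (Hmult : forall N : nat, Q (INR N * h)).
  { induction N as [|N IH].
    - simpl. rewrite Rmult_0_l. exact Q0.
    - rewrite S_INR, Rmult_plus_distr_r, Rmult_1_l. apply Hstep; [|exact IH].
      apply Rmult_le_pos; [apply pos_INR | lra]. }
  destruct (INR_archimed h t Hh) as [N HN].
  apply (Hdown (INR N * h)); [lra | apply Hmult].
Qed.

Lemma glb_exists (E : R -> Prop) (b : R) :
  (forall x, E x -> b <= x) -> (exists x, E x) -> exists m, is_glb_R E m.
Proof.
  intros Hb [x Hx].
  destruct (completeness (fun y => E (- y))) as [m [Hub Hleast]].
  - exists (- b). intros y Hy. apply Hb in Hy. lra.
  - exists (- x). rewrite Ropp_involutive. exact Hx.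
  - exists (- m). split.
    + intros z Hz. assert (- z <= m) by (apply Hub; rewrite Ropp_involutive; exact Hz). lra.
    + intros b' Hb'. assert (m <= - b') by (apply Hleast; intros y Hy; apply Hb' in Hy; lra). lra.
Qed.

Lemma glb_unique (E : R -> Prop) (m1 m2 : R) :
  is_glb_R E m1 -> is_glb_R E m2 -> m1 = m2.
Proof. intros [A1 B1] [A2 B2]. apply Rle_antisym; [apply B2 | apply B1]; assumption. Qed.

Lemma glb_approx (E : R -> Prop) (m : R) :
  is_glb_R E m -> forall eps, 0 < eps -> exists x, E x /\ x < m + eps.
Proof.
  intros [_ Hgreatest] eps He. apply NNPP. intro N.
  assert (m + eps <= m); [|lra].
  apply Hgreatest. intros x Hx. apply Rnot_lt_le. intro. apply N. eauto.
Qed.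

Lemma lub_approx (E : R -> Prop) (m : R) :
  is_lub E m -> forall eps, 0 < eps -> exists x, E x /\ m - eps < x.
Proof.
  intros [_ Hleast] eps He. apply NNPP. intro N.
  assert (m <= m - eps); [|lra].
  apply Hleast. intros x Hx. apply Rnot_lt_le. intro. apply N. eauto.
Qed.

Lemma glb_closed (T E : R -> Prop) (m : R) :
  Defs.closed_set T -> (forall x, E x -> T x) -> is_glb_R E m -> T m.
Proof.
  intros HC HE Hm. unfold Defs.closed_set in HC. apply HC. intros eps He.
  destruct (glb_approx E m Hm eps He) as [x [Hx Hlt]].
  exists x. split; [auto|]. destruct Hm as [Hlow _]. specialize (Hlow x Hx).
  rewrite Rabs_left1; lra.
Qed.

Lemma lub_closed (T E : R -> Prop) (m : R) :
  Defs.closed_set T -> (forall x, E x -> T x) -> is_lub E m -> T m.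
Proof.
  intros HC HE Hm. unfold Defs.closed_set in HC. apply HC. intros eps He.
  destruct (lub_approx E m Hm eps He) as [x [Hx Hlt]].
  exists x. split; [auto|]. destruct Hm as [Hup _]. specialize (Hup x Hx).
  rewrite Rabs_right; lra.
Qed.

Lemma sigma_ge (T : R -> Prop) (t s : R) : is_sigma T t s -> t <= s.
Proof. intros [_ Hgreatest]. apply Hgreatest. intros x [_ Hx]. lra. Qed.

Lemma sigma_gap (T : R -> Prop) (t s r : R) : is_sigma T t s -> T r -> t < r -> s <= r.
Proof. intros [Hlow _] Hr Htr. apply Hlow. auto. Qed.

Lemma sigma_exists (T : R -> Prop) (t : R) :
  (forall M, exists r, T r /\ M < r) -> exists s, is_sigma T t s.
Proof.
  intros Hup. destruct (Hup t) as [r [Hr Htr]].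
  apply (glb_exists _ t).
  - intros x [_ Hx]; lra.
  - exists r; auto.
Qed.

Definition left_dense (T : R -> Prop) (t : R) : Prop :=
  forall d, 0 < d -> exists s, T s /\ t - d < s /\ s < t.

(* A point m that is not left-dense, with t0 < m in T, is the forward jump
   of its predecessor r = sup (T ∩ [t0, m)). *)
Lemma left_scattered_predecessor (T : R -> Prop) (t0 m : R) :
  Defs.closed_set T -> T t0 -> T m -> t0 < m -> ~ left_dense T m ->
  exists r, T r /\ t0 <= r /\ r < m /\ is_sigma T r m.
Proof.
  intros HC Ht0 Tm Hlt Hnd.
  assert (Hgap : exists d, 0 < d /\ forall s, T s -> ~ (m - d < s /\ s < m)).
  { apply NNPP. intro N. apply Hnd. intros d Hd. apply NNPP. intro N2. apply N.
    exists d. split; auto. intros s Ts Hs. apply N2. exists s. tauto. }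
  destruct Hgap as [d [Hd Hgap]].
  set (E := fun x => T x /\ t0 <= x /\ x < m).
  destruct (completeness E) as [r Hr].
  { exists m. intros x [_ [_ Hx]]. lra. }
  { exists t0. unfold E. repeat split; auto; lra. }
  assert (Tr : T r) by (apply (lub_closed T E); [exact HC | intros x [Hx _]; exact Hx | exact Hr]).
  assert (Hr0 : t0 <= r) by (apply (proj1 Hr); unfold E; repeat split; auto; lra).
  assert (Hrm : r <= m - d).
  { apply (proj2 Hr). intros x [Tx [_ Hx]].
    apply Rnot_lt_le. intro. apply (Hgap x Tx). lra. }
  exists r. repeat split; auto; try lra.
  - intros x [Tx Hx]. apply Rnot_lt_le. intro.
    assert (x <= r) by (apply (proj1 Hr); unfold E; repeat split; auto; lra). lra.
  - intros b Hb. apply Hb. split; auto. lra.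
Qed.

Lemma time_scale_induction (T P : R -> Prop) (t0 : R) :
  Defs.closed_set T -> (forall M, exists r, T r /\ M < r) -> T t0 -> P t0 ->
  (forall t s, T t -> t0 <= t -> is_sigma T t s -> t < s -> P t -> P s) ->
  (forall t, T t -> t0 <= t -> is_sigma T t t -> P t ->
     exists d, 0 < d /\ forall s, T s -> t < s -> s < t + d -> P s) ->
  (forall t, T t -> t0 < t -> left_dense T t ->
     (forall s, T s -> t0 <= s -> s < t -> P s) -> P t) ->
  forall t, T t -> t0 <= t -> P t.
Proof.
  intros HC Hup Ht0 P0 Hscat Hdense Hleft.
  apply NNPP. intro Hfail.
  set (F := fun x => T x /\ t0 <= x /\ ~ P x).
  assert (HF : exists x, F x).
  { apply NNPP. intro N. apply Hfail. intros t Ht Hle. apply NNPP. intro Np.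
    apply N. exists t. unfold F. auto. }
  (* m is the infimum of the failures; P holds on T ∩ [t0, m]. *)
  destruct (glb_exists F t0) as [m [Hlow Hgreatest]]; [intros x [_ [Hx _]]; exact Hx | exact HF |].
  assert (Tm : T m) by (apply (glb_closed T F); [exact HC | intros x [Hx _]; exact Hx | split; auto]).
  assert (Hm0 : t0 <= m) by (apply Hgreatest; intros x [_ [Hx _]]; exact Hx).
  assert (Hbefore : forall s, T s -> t0 <= s -> s < m -> P s).
  { intros s Ts Hs Hsm. apply NNPP. intro Np.
    assert (m <= s) by (apply Hlow; unfold F; auto). lra. }
  assert (Pm : P m).
  { destruct (Req_dec m t0) as [E|Hne]; [rewrite E; exact P0|].
    destruct (classic (left_dense T m)) as [LD|NLD]; [apply Hleft; auto; lra|].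
    destruct (left_scattered_predecessor T t0 m HC Ht0 Tm ltac:(lra) NLD)
      as [r [Tr [Hr0 [Hrm Hsig]]]].
    apply (Hscat r m); auto. }
  assert (Hafter : forall x, F x -> m < x).
  { intros x [Tx [Hx Np]]. assert (m <= x) by (apply Hlow; unfold F; auto).
    destruct (Req_dec x m) as [E|Ne]; [subst; contradiction | lra]. }
  destruct (sigma_exists T m Hup) as [s Hs].
  destruct (Rle_lt_or_eq_dec _ _ (sigma_ge _ _ _ Hs)) as [Hlt|Heq].
  - (* m right-scattered: sigma(m) would be a lower bound of the failures *)
    assert (Ps : P s) by (apply (Hscat m s); auto).
    assert (s <= m); [|lra].
    apply Hgreatest. intros x Hx. pose proof (Hafter x Hx) as Hmx.
    destruct Hx as [Tx [_ Np]].
    apply (sigma_gap T m s x Hs Tx Hmx).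
  - (* m right-dense: P holds on a right neighbourhood of m *)
    subst s. destruct (Hdense m Tm Hm0 Hs Pm) as [d [Hd Hnear]].
    assert (m + d <= m); [|lra].
    apply Hgreatest. intros x Hx. pose proof (Hafter x Hx) as Hmx.
    destruct Hx as [Tx [_ Np]].
    apply Rnot_lt_le. intro. apply Np. apply Hnear; auto.
Qed.

Lemma delta_deriv_jump (T : R -> Prop) (f : R -> R) (t a s : R) :
  T t -> delta_deriv T f t a -> is_sigma T t s -> f s = f t + (s - t) * a.
Proof.
  intros Ht [sg [Hsg Hdf]] Hs.
  rewrite (glb_unique _ _ _ Hs Hsg).
  assert (f sg - f t - a * (sg - t) = 0); [|lra].
  apply (abs_small_zero _ (Rabs (sg - t))); [apply Rabs_pos|].
  intros eps He. destruct (Hdf eps He) as [d [Hd Hnear]]. apply Hnear; auto.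
  unfold Rminus. rewrite Rplus_opp_r, Rabs_R0. exact Hd.
Qed.

Lemma delta_deriv_dense (T : R -> Prop) (f : R -> R) (t a : R) :
  delta_deriv T f t a -> is_sigma T t t ->
  forall eta, 0 < eta -> exists d, 0 < d /\ forall s, T s -> Rabs (t - s) < d ->
    Rabs (f t - f s - a * (t - s)) <= eta * Rabs (t - s).
Proof. intros [sg [Hsg Hdf]] Ht. rewrite (glb_unique _ _ _ Hsg Ht) in Hdf. exact Hdf. Qed.

Lemma delta_deriv_continuous (T : R -> Prop) (f : R -> R) (t a : R) :
  T t -> delta_deriv T f t a ->
  forall g, 0 < g -> exists d, 0 < d /\
    forall s, T s -> Rabs (t - s) < d -> Rabs (f s - f t) < g.
Proof.
  intros Ht [sg [Hsg Hdf]] g Hg.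
  pose proof (sigma_ge _ _ _ Hsg) as Hge.
  set (K := 2 * (sg - t) + 1).
  assert (HK : 0 < K) by (unfold K; lra).
  destruct (Hdf (g / (2 * K)) ltac:(apply Rdiv_lt_0_compat; lra)) as [d [Hd Hnear]].
  set (r := g / (2 * (Rabs a + 1))).
  assert (Ha := Rabs_pos a).
  assert (Hr : 0 < r) by (unfold r; apply Rdiv_lt_0_compat; lra).
  exists (Rmin d (Rmin 1 r)). split; [repeat apply Rmin_pos; lra|].
  intros s Ts Hts.
  pose proof (Rmin_l d (Rmin 1 r)). pose proof (Rmin_r d (Rmin 1 r)).
  pose proof (Rmin_l 1 r). pose proof (Rmin_r 1 r).
  pose proof (Rabs_pos (t - s)).
  assert (Es := Hnear s Ts ltac:(lra)).
  assert (Et := Hnear t Ht ltac:(unfold Rminus; rewrite Rplus_opp_r, Rabs_R0; lra)).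
  assert (Hsgs : Rabs (sg - s) <= (sg - t) + Rabs (t - s)).
  { replace (sg - s) with ((sg - t) + (t - s)) by ring.
    eapply Rle_trans; [apply Rabs_triang|]. rewrite (Rabs_right (sg - t)) by lra. lra. }
  rewrite (Rabs_right (sg - t)) in Et by lra.
  assert (Hsplit : Rabs (f s - f t) <=
     Rabs (f sg - f t - a * (sg - t)) + Rabs (f sg - f s - a * (sg - s)) + Rabs a * Rabs (t - s)).
  { replace (f s - f t) with ((f sg - f t - a * (sg - t))
                              + (- (f sg - f s - a * (sg - s)) + - (a * (t - s)))) by ring.
    eapply Rle_trans; [apply Rabs_triang|].
    eapply Rle_trans; [apply Rplus_le_compat_l, Rabs_triang|].
    rewrite !Rabs_Ropp, Rabs_mult. lra. }
  assert (Heta : g / (2 * K) * K = g / 2) by (field; lra).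
  assert (Hra : r * (Rabs a + 1) = g / 2) by (unfold r; field; lra).
  assert (g / (2 * K) * Rabs (sg - s) <= g / (2 * K) * (sg - t + 1)).
  { apply Rmult_le_compat_l; [apply Rlt_le, Rdiv_lt_0_compat; lra | lra]. }
  assert (Rabs a * Rabs (t - s) <= Rabs a * r) by (apply Rmult_le_compat_l; lra).
  unfold K in *. nra.
Qed.

Section Barrier.

Variables (T : R -> Prop) (c a b tau t2 : R) (f g D : R -> R).

Hypothesis HT : time_scale_0_inf T.
Hypothesis Hc : 0 < c.
Hypothesis Ha : 0 <= a.
Hypothesis Hb : a * c < b.
Hypothesis Htau : 0 <= tau.
Hypothesis Hgrain : forall t m, T t -> graininess T t m -> 1 - c * m > 0.
Hypothesis Hderiv : forall t, T t -> delta_deriv T f t (D t).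
Hypothesis Hequation : forall t, T t -> D t = - c * f t + c * g t.
Hypothesis Hf_before : forall s, T s -> s <= tau -> 0 <= f s.
Hypothesis Hg_before : forall s, T s -> s <= tau -> 0 <= g s.
Hypothesis Hg_lower : forall s, T s -> s <= t2 -> - a <= g s.

Definition barrier_at (t : R) : Prop :=
  t <= t2 -> tau <= t -> 0 <= f t + b * (t - tau).

(* b is nonnegative since a c >= 0; used implicitly by the arithmetic below. *)
Let Hb0 : 0 <= b.
Proof. nra. Qed.

(* One jump: f(sigma t) = (1 - c mu) f(t) + c mu g(t) with 1 - c mu > 0. *)
Lemma barrier_jump (t s : R) :
  T t -> is_sigma T t s -> t < s -> barrier_at t -> barrier_at s.
Proof.
  intros Tt Hs Hts Pt Hst2 Htaus.
  assert (Hjump := delta_deriv_jump T f t (D t) s Tt (Hderiv t Tt) Hs).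
  rewrite Hequation in Hjump by exact Tt.
  assert (Hmu : 1 - c * (s - t) > 0) by (apply (Hgrain t); auto; exists s; split; auto).
  assert (Hcmu : 0 < c * (s - t)) by nra.
  destruct (Rlt_le_dec t tau) as [Hlt|Hle].
  - assert (0 <= f t) by (apply Hf_before; auto; lra).
    assert (0 <= g t) by (apply Hg_before; auto; lra).
    assert (0 <= b * (s - tau)) by nra.
    nra.
  - assert (Ht := Pt ltac:(lra) Hle).
    assert (Hgt := Hg_lower t Tt ltac:(lra)).
    assert (c * (s - t) * g t >= - (b * (s - t))) by nra.
    destruct (Rle_lt_dec (f t) 0).
    + assert (c * (s - t) * f t <= 0) by nra. nra.
    + assert (0 <= (1 - c * (s - t)) * f t) by nra.
      assert (0 <= b * (t - tau)) by nra. nra.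
Qed.

(* Right-dense points: the slack b - a c absorbs the derivative error. *)
Lemma barrier_right_dense (t : R) :
  T t -> is_sigma T t t -> barrier_at t ->
  exists d, 0 < d /\ forall s, T s -> t < s -> s < t + d -> barrier_at s.
Proof.
  intros Tt Hs Pt.
  destruct (Rle_lt_dec t2 t) as [Ht2|Ht2].
  { exists 1. split; [lra|]. intros s _ H1 _ H3. lra. }
  destruct (Rlt_le_dec t tau) as [Hlt|Hle].
  { exists (tau - t). split; [lra|]. intros s _ H1 H2 _ H3. lra. }
  assert (Ht := Pt ltac:(lra) Hle).
  assert (Hgt := Hg_lower t Tt ltac:(lra)).
  set (eta := (b - a * c) / 2).
  destruct (delta_deriv_dense T f t (D t) (Hderiv t Tt) Hs eta ltac:(unfold eta; lra))
    as [d [Hd Hnear]].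
  exists (Rmin d (/ c)). split; [apply Rmin_pos; [lra | apply Rinv_0_lt_compat; lra]|].
  intros s Ts H1 H2 _ _.
  pose proof (Rmin_l d (/ c)). pose proof (Rmin_r d (/ c)).
  assert (Hsc : c * (s - t) < 1).
  { apply (Rmult_lt_reg_r (/ c)); [apply Rinv_0_lt_compat; lra|].
    replace (c * (s - t) * / c) with (s - t) by (field; lra). lra. }
  assert (E := Hnear s Ts ltac:(rewrite Rabs_left; lra)).
  rewrite (Rabs_left (t - s)) in E by lra.
  pose proof (Rle_abs (f t - f s - D t * (t - s))) as HA.
  rewrite (Hequation t Tt) in HA, E.
  assert (Hcs : 0 < c * (s - t)) by nra.
  assert (0 <= (g t + a) * (c * (s - t))) by (apply Rmult_le_pos; lra).
  assert (0 <= b * (t - tau)) by nra.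
  assert (Hexpand : (- c * f t + c * g t) * (t - s)
     = f t * (c * (s - t)) - (g t + a) * (c * (s - t)) + a * (c * (s - t))) by ring.
  unfold eta in E.
  destruct (Rle_lt_dec (f t) 0).
  - assert (f t * (c * (s - t)) <= 0) by nra. nra.
  - assert (f t * (1 - c * (s - t)) >= 0) by nra. nra.
Qed.

(* Left-dense points: continuity of f carries the bound up to t. *)
Lemma barrier_left_dense (t : R) :
  T t -> left_dense T t -> (forall s, T s -> 0 <= s -> s < t -> barrier_at s) ->
  barrier_at t.
Proof.
  intros Tt LD Hprev Ht2 Htaut.
  destruct (Req_dec t tau) as [E|Ne].
  { subst. specialize (Hf_before tau Tt (Rle_refl _)). lra. }
  apply Rnot_lt_le. intro Hneg.
  set (gam := - (f t + b * (t - tau))).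
  destruct (delta_deriv_continuous T f t (D t) Tt (Hderiv t Tt) (gam / 2)
              ltac:(unfold gam; lra)) as [d [Hd Hnear]].
  destruct (LD (Rmin d (t - tau)) ltac:(apply Rmin_pos; lra)) as [s [Ts [Hs1 Hs2]]].
  pose proof (Rmin_l d (t - tau)). pose proof (Rmin_r d (t - tau)).
  assert (Ps := Hprev s Ts ltac:(lra) Hs2 ltac:(lra) ltac:(lra)).
  assert (Hfs := Hnear s Ts ltac:(rewrite Rabs_right; lra)).
  pose proof (Rle_abs (f s - f t)).
  assert (b * (s - tau) <= b * (t - tau)) by (apply Rmult_le_compat_l; lra).
  unfold gam in *. lra.
Qed.

Lemma barrier :
  forall t, T t -> tau <= t -> t <= t2 -> 0 <= f t + b * (t - tau).
Proof.
  destruct HT as [HC [T0 [Hpos Hup]]].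
  intros t Tt Htau_t Ht2.
  enough (Hclaim : barrier_at t) by exact (Hclaim Ht2 Htau_t).
  apply (time_scale_induction T barrier_at 0 HC Hup T0); [| | | | exact Tt | exact (Hpos t Tt)].
  - intros H1 H2. assert (tau = 0) by lra. subst. specialize (Hf_before 0 T0 (Rle_refl 0)). lra.
  - intros r s Tr _. apply barrier_jump; auto.
  - intros r Tr _. apply barrier_right_dense; auto.
  - intros r Tr _. apply barrier_left_dense; auto.
Qed.

End Barrier.

Section Positivity.

Variables (T : R -> Prop) (c : R) (u ud : Z -> R -> R).

Hypothesis HT : time_scale_0_inf T.
Hypothesis Hc : 0 < c.
Hypothesis Hgrain : forall t m, T t -> graininess T t m -> 1 - c * m > 0.
Hypothesis Hderiv : forall n t, T t -> delta_deriv T (u n) t (ud n t).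
Hypothesis Hequation : forall n t, T t -> ud n t = - c * u n t + c * u (n - 1)%Z t.
Hypothesis Hbounded : forall T0, 0 < T0 -> exists M, forall n t,
  T t -> t <= T0 -> Rabs (u n t) <= M.

Definition nonneg_until (tau : R) : Prop :=
  forall n s, T s -> s <= tau -> 0 <= u n s.

Let h : R := / (2 * c).

Let Hh : 0 < h.
Proof. unfold h. apply Rinv_0_lt_compat. lra. Qed.

Lemma slab_halving (tau a : R) :
  0 <= tau -> 0 <= a -> nonneg_until tau ->
  (forall n s, T s -> s <= tau + h -> - a <= u n s) ->
  forall n s, T s -> s <= tau + h -> - (a / 2) <= u n s.
Proof.
  intros Htau Ha Hbefore Hlower n s Ts Hs.
  destruct (Rle_lt_dec s tau) as [Hst|Hst].
  { specialize (Hbefore n s Ts Hst). lra. }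
  assert (Hbar : 0 <= u n s + a * c * (s - tau)).
  { apply nonneg_limit_slope; [lra|]. intros b Hb.
    apply (barrier T c a b tau (tau + h) (u n) (u (n - 1)%Z) (ud n)); auto; try lra. }
  assert (a * c * (s - tau) <= a * c * h) by (apply Rmult_le_compat_l; nra).
  assert (a * c * h = a / 2) by (unfold h; field; lra).
  lra.
Qed.

(* Nonnegativity propagates over one slab: iterate the halving, starting
   from the bound given by boundedness of the solution. *)
Lemma slab_step (tau : R) : 0 <= tau -> nonneg_until tau -> nonneg_until (tau + h).
Proof.
  intros Htau Hbefore.
  destruct (Hbounded (tau + h) ltac:(lra)) as [M HM].
  assert (HM0 : 0 <= M).
  { destruct HT as [_ [T0 _]]. specialize (HM 0%Z 0 T0 ltac:(lra)).
    pose proof (Rabs_pos (u 0%Z 0)). lra. }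
  assert (Hlevels : forall j : nat, forall n s, T s -> s <= tau + h -> - (M * (/ 2) ^ j) <= u n s).
  { induction j as [|j IHj]; intros n s Ts Hs.
    - simpl. rewrite Rmult_1_r. specialize (HM n s Ts Hs). pose proof (neg_abs_le (u n s)). lra.
    - replace (M * (/ 2) ^ S j) with (M * (/ 2) ^ j / 2) by (simpl; field).
      apply (slab_halving tau); auto.
      apply Rmult_le_pos; [lra | apply pow_le; lra]. }
  intros n s Ts Hs. apply (halving_zero M); [exact HM0 | intro j; apply Hlevels; auto].
Qed.

Lemma nonneg_everywhere :
  nonneg_until 0 -> forall n t, T t -> 0 <= u n t.
Proof.
  intros H0 n t Tt.
  assert (Hdown : forall x y, y <= x -> nonneg_until x -> nonneg_until y).
  { intros x y Hyx Hx m s Ts Hs. apply Hx; auto; lra. }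
  exact (forall_by_steps nonneg_until h Hh H0 slab_step Hdown t n t Tt (Rle_refl t)).
Qed.

End Positivity.

Lemma rate_form (k mux un unm1 udn : R) :
  0 < mux -> udn + k * (un - unm1) / mux = 0 ->
  udn = - (k / mux) * un + (k / mux) * unm1.
Proof.
  intros Hmux H. replace udn with (- (k * (un - unm1) / mux)) by lra.
  field. lra.
Qed.

Theorem mainTheorem9 (T : R -> Prop) (A k mux : R) (u : Z -> R -> R) :
  time_scale_0_inf T -> 0 < A -> 0 < k -> 0 < mux ->
  TS1 T k mux ->
  is_solution_P T A k mux u ->
  forall (n : Z) (t : R), T t -> 0 <= u n t.
Proof.
  intros HT HA Hk Hmux HTS [[ud Hud] [Hu0 [Hun Hbd]]].
  apply (nonneg_everywhere T (k / mux) u ud); auto.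
  - apply Rdiv_lt_0_compat; lra.
  - intros t m Tt Hm. specialize (HTS t m Tt Hm).
    replace (k / mux * m) with (k * m / mux) by (field; lra). exact HTS.
  - intros n t Tt. apply Hud, Tt.
  - intros n t Tt. apply rate_form; [lra | apply Hud, Tt].
  - (* at time 0 the data is A >= 0 at the origin and 0 elsewhere *)
    intros n s Ts Hs. destruct HT as [_ [_ [Hpos _]]].
    assert (s = 0) by (specialize (Hpos s Ts); lra). subst s.
    destruct (Z.eq_dec n 0) as [E|Ne]; [subst; lra | rewrite (Hun n Ne); lra].
Qed.
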